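(* Let $\mathbb{S}$ be a metric space with its Borel $\sigma$-field, let $\{\mu_n\}_{n=1,2,\ldots}$ be a sequence of measures on $\mathbb{S}$ converging weakly to a finite measure $\mu$ on $\mathbb{S}$, and let $\{f_n\}_{n=1,2,\ldots}$ be a sequence of measurable $[-\infty,+\infty]$-valued functions on $\mathbb{S}$ such that $\{f_n^-\}_{n=1,2,\ldots}$ is asymptotically uniformly integrable with respect to $\{\mu_n\}_{n=1,2,\ldots}$. Then $$\int_{\mathbb{S}}\liminf_{n\to\infty,\,s'\to s} f_n(s')\,\mu(ds)\le\liminf_{n\to\infty}\int_{\mathbb{S}} f_n(s)\,\mu_n(ds).$$
   Context: $\mu_n$ converges weakly to $\mu$ means $\int f\,d\mu_n\to\int f\,d\mu$ for every bounded continuous $f:\mathbb{S}\to\mathbb{R}$. $f^-=-\min\{f,0\}$, $f^+=\max\{f,0\}$. For an extended-real function $f$ and measure $\nu$, $\int f\,d\nu:=\int f^+d\nu-\int f^-d\nu$, defined when $\min\{\int f^+d\nu,\int f^-d\nu\}<\infty$; all integrals appearing in the hypotheses and conclusion are assumed to be defined. $\liminf_{n\to\infty,s'\to s}f_n(s'):=\sup_{n\ge1,\delta>0}\inf_{m\ge n,\,s'\in B_\delta(s)}f_m(s')$, where $B_\delta(s)$ is the open ball of radius $\delta$ about $s$. A sequence $\{h_n\}$ is asymptotically uniformly integrable with respect to $\{\mu_n\}$ if $\lim_{K\to+\infty}\limsup_{n\to\infty}\int|h_n|\,\mathbf{1}\{|h_n|\ge K\}\,d\mu_n=0$. *)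

From HB Require Import structures.
From mathcomp Require Import all_boot all_order all_algebra.
From mathcomp Require Import all_classical all_reals all_analysis measurable_realfun.

Set Implicit Arguments.
Unset Strict Implicit.
Unset Printing Implicit Defensive.

Import Order.TTheory GRing.Theory Num.Theory.
Import numFieldNormedType.Exports.

Local Open Scope classical_set_scope.
Local Open Scope ring_scope.

(* A (nonempty) metric space: mathcomp-analysis metric structure (distance
   mdist, with ball x d = [set y | mdist x y < d]) together with a point
   (measurable types in mathcomp-analysis are required to be pointed). *)
#[short(type="pmetricType")]
HB.structure Definition PointedMetric (K : numDomainType) :=
  { M of Metric K M & isPointed M }.

Notation borel S := (g_sigma_algebraType (@open S)).

Section defs.
Context {R : realType} (S : pmetricType R).
Local Notation T := (borel S).

Definition weak_cvg (mu_ : nat -> {measure set T -> \bar R})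
    (mu : {measure set T -> \bar R}) : Prop :=
  forall f : S -> R, continuous f -> (exists M : R, forall x, `|f x| <= M) ->
    ((\int[mu_ n]_x (f x)%:E)%E) @[n --> \oo] --> (\int[mu]_x (f x)%:E)%E.

Definition asymp_unif_integrable (mu_ : nat -> {measure set T -> \bar R})
    (h : nat -> T -> \bar R) : Prop :=
  (limn_esup (fun n => \int[mu_ n]_(x in [set x | (K%:E <= `|h n x|)%E])
                          `|h n x|)%E) @[K --> +oo%R] --> 0%E.

Definition liminf_joint (f : nat -> T -> \bar R) (s : S) : \bar R :=
  ereal_sup [set y | exists n : nat, exists2 d : R, 0 < d &
    y = ereal_inf [set z | exists2 m : nat, (n <= m)%N &
                             exists2 s' : S, ball s d s' & z = f m s']].

End defs.

(* Fix e > 0.  Asymptotic uniform integrability gives K >= 0 such that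
   \int_{f_n^- >= K} f_n^- d mu_n < e for large n, and the truncations
   F_n = max(f_n, -K) + K are nonnegative.  Let H_j(s) be the infimum of F_m
   over m >= j and the ball of radius 1/(j+1) around s, and let psi_j be the
   j-Lipschitz envelope of min(H_j, j): psi_j is continuous, bounded by j,
   below F_m for m >= j, and liminf_j psi_j dominates the joint liminf of F.
   Pointwise, psi_j - K - f_m^- 1{f_m^- >= K} <= f_m for m >= j, so weak
   convergence (applied to psi_j and to 1) yields
   \int psi_j d mu <= liminf_n \int f_n d mu_n + K mu(S) + e.  Fatou's lemma
   in j then bounds \int liminf_j psi_j d mu, which is at least
   \int liminf_joint f d mu + K mu(S). *)

From HB Require Import structures.
From mathcomp Require Import all_boot all_order all_algebra.
From mathcomp Require Import all_classical all_reals all_analysis measurable_realfun.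
From mathcomp Require Import lra.

Import Order.TTheory GRing.Theory Num.Theory.
Import numFieldNormedType.Exports.
Local Open Scope classical_set_scope.
Local Open Scope ring_scope.
Local Open Scope ereal_scope.

Section limn_einf_lemmas.
Context {R : realType}.
Implicit Types (u v : (\bar R)^nat) (x y : \bar R).

Lemma lee_fin_ltP x y : reflect (forall r : R, r%:E < x -> r%:E <= y) (x <= y).
Proof.
apply: (iffP idP) => [xy r rx|xy]; first exact: le_trans (ltW rx) xy.
case: x xy => [r| |] xy; case: y xy => [q| |] xy //=; rewrite ?leey ?leNye //.
- rewrite lee_fin leNgt; apply/negP => qr.
  have := xy ((q + r) / 2)%R; rewrite !lte_fin !lee_fin => /(_ ltac:(lra)); lra.
- by have := xy (r - 1)%R; rewrite lte_fin => /(_ ltac:(lra)).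
- by have := xy (q + 1)%R; rewrite ltry lee_fin => /(_ isT) ?; exfalso; lra.
- by have := xy 0%R; rewrite ltry => /(_ isT).
Qed.

Lemma limn_einfE u : limn_einf u = ereal_sup [set ereal_inf (u @` V) | V in \oo].
Proof. exact: limf_einfE. Qed.

Lemma limn_einf_ge u x : (\forall n \near \oo, x <= u n) -> x <= limn_einf u.
Proof.
move=> [N _ xu]; rewrite limn_einfE; apply: le_ereal_sup_tmp.
exists (ereal_inf (u @` [set n | (N <= n)%N])).
  by exists [set n | (N <= n)%N] => //; exists N.
by apply: le_ereal_inf_tmp => _ [n Nn <-]; exact: xu.
Qed.

Lemma limn_einf_le u x : (forall n, u n <= x) -> limn_einf u <= x.
Proof.
move=> ux; rewrite limn_einfE; apply: ge_ereal_sup => _ [V [N _ NV] <-].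
by apply: ge_ereal_inf; exists (u N); [exists N => //; exact: (NV N (leqnn N))|].
Qed.

Lemma le_limn_einf u v : (\forall n \near \oo, u n <= v n) ->
  limn_einf u <= limn_einf v.
Proof.
move=> [N _ uv]; rewrite [leLHS]limn_einfE.
apply: ge_ereal_sup => _ [V [M _ MV] <-]; apply: limn_einf_ge.
exists (maxn N M) => // n /=; rewrite geq_max => /andP[Nn Mn].
by apply: le_trans (uv _ Nn); apply: ereal_inf_lbound; exists n => //; exact: MV.
Qed.

Lemma limn_esup_lt u x : limn_esup u < x -> \forall n \near \oo, u n < x.
Proof.
rewrite /limn_esup limf_esupE => /ereal_inf_lt[_ [V uV <-]] Vx.
apply: filterS uV => n Vn; apply: le_lt_trans Vx.
by apply: ereal_sup_ubound; exists n.
Qed.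

End limn_einf_lemmas.

Section lower_semicontinuous_measurable.
Context {R : realType} {T : ptopologicalType}.

Lemma lower_semicontinuous_measurable_borel (g : T -> \bar R) :
  lower_semicontinuous g -> measurable_fun (setT : set (borel T)) g.
Proof.
move=> /lower_semicontinuousP og.
apply: (measurability _ (ErealGenOInfty.measurableE R)) => /= _ [_ [a ->]] <-.
apply: measurableI => //; apply: sub_sigma_algebra.
by rewrite preimage_itvoy; exact: og.
Qed.

Lemma continuous_lower_semicontinuous (g : T -> R) :
  continuous g -> lower_semicontinuous (EFin \o g).
Proof.
move=> cg x a /= ax; exists [set y | a < g y]%R => [|y]; last by rewrite lte_fin.
exact: cvgr_gt (cg x) _ ax.
Qed.

End lower_semicontinuous_measurable.

Lemma sube_tail_le {R : realType} (y : \bar R) (p K : R) : (0 <= K)%R ->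
  (0 <= p)%R -> p%:E <= maxe y (- K%:E) + K%:E ->
  p%:E - K%:E - (if K%:E <= maxe (- y) 0 then maxe (- y) 0 else 0) <= y.
Proof.
move=> K0 p0; case: ifPn; rewrite -?ltNge; case: y => [r| |] //=;
  rewrite ?maxye ?maxNye ?leey // -!EFin_max -!EFinD ?subr0 ?lte_fin ?lee_fin;
  rewrite /Num.max;
  by repeat case: ifP => ? /=; lra.
Qed.

Section integral_lemmas.
Context {d} {T : measurableType d} {R : realType} (nu : {measure set T -> \bar R}).
Implicit Types (h g : T -> \bar R).

(* No integrability is needed: in \bar R, [x - z <= y - u] whenever
   [x <= y] and [u <= z]. *)
Lemma le_integral_measurable (D : set T) h g : measurable D ->
  measurable_fun D h -> measurable_fun D g -> (forall x, D x -> h x <= g x) ->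
  \int[nu]_(x in D) h x <= \int[nu]_(x in D) g x.
Proof.
move=> mD mh mg hg; have hg' : {in D, forall x, h x <= g x}.
  by move=> x /set_mem; exact: hg.
rewrite [leLHS]integralE [leRHS]integralE; apply: leeB.
- apply: ge0_le_integral => //; try exact: measurable_funepos.
  by move=> x Dx; apply: (funepos_le hg'); exact: mem_set.
- apply: ge0_le_integral => //; try exact: measurable_funeneg.
  by move=> x Dx; apply: (funeneg_le hg'); exact: mem_set.
Qed.

Lemma measurable_fun_limn_einf (D : set T) (f : (T -> \bar R)^nat) :
  (forall n, measurable_fun D (f n)) ->
  measurable_fun D (fun x => limn_einf (f ^~ x)).
Proof.
move=> mf; apply: measurableT_comp => //; apply: measurable_fun_limn_esup => n.
exact: measurableT_comp.
Qed.

Lemma integrable_cst_fin (c : R) : nu setT \is a fin_num ->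
  nu.-integrable setT (EFin \o cst c).
Proof.
move=> nuS; apply/integrableP; split; first exact/measurable_EFinP.
by rewrite (eq_integral (cst `|c|%:E)) // integral_cst //= -(fineK nuS) -EFinM ltry.
Qed.

Lemma integrable_bounded (psi : T -> R) (B : R) : nu setT \is a fin_num ->
  measurable_fun setT (EFin \o psi) -> (forall x, `|psi x| <= B)%R ->
  nu.-integrable setT (EFin \o psi).
Proof.
move=> nuS mpsi psiB; apply: le_integrable (integrable_cst_fin B nuS) => // x _.
by rewrite /= lee_fin (le_trans (psiB x)) // ler_norm.
Qed.

Lemma le_integral_addr_cst h g (c : R) : nu setT \is a fin_num ->
  measurable_fun setT h -> measurable_fun setT g -> (forall x, 0 <= g x) ->
  (forall x, h x + c%:E <= g x) ->
  \int[nu]_x h x + c%:E * nu setT <= \int[nu]_x g x.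
Proof.
move=> nuS mh mg g0 hg.
have [->|gfin] := eqVneq (\int[nu]_x g x) +oo; first by rewrite leey.
have ig : nu.-integrable setT g.
  apply/integrableP; split => //.
  by under eq_integral do rewrite gee0_abs //; rewrite ltey.
have ic := integrable_cst_fin c nuS.
rewrite -leeBrDr ?fin_numM // -(integral_cst nu measurableT) -integralB //.
apply: le_integral_measurable => // [|x _]; first exact: emeasurable_funB.
by rewrite /= EFinN leeBrDr.
Qed.

Definition tail_integral h (K : R) :=
  \int[nu]_(x in [set x | K%:E <= `|h x|]) `|h x|.

Lemma integral_ge_truncated (f : T -> \bar R) (psi : T -> R) (K : R) :
  (0 <= K)%R -> nu setT \is a fin_num -> measurable_fun setT f ->
  nu.-integrable setT (EFin \o psi) -> (forall x, 0 <= psi x)%R ->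
  (forall x, (psi x)%:E <= maxe (f x) (- K%:E) + K%:E) ->
  tail_integral f^\- K \is a fin_num ->
  \int[nu]_x (psi x)%:E - K%:E * nu setT - tail_integral f^\- K <= \int[nu]_x f x.
Proof.
move=> K0 nuS mf ipsi psi0 psif tfin.
set D := [set x | K%:E <= `|f^\- x|].
have mfn : measurable_fun setT (fun x => `|f^\- x|).
  exact/measurableT_comp/measurable_funeneg.
have mD : measurable D.
  by rewrite /D -[X in measurable X]setTI; exact: measurable_lee.
set tail := (fun x => `|f^\- x|) \_ D.
have itail : nu.-integrable setT tail.
  apply/(integrable_mkcond _ mD)/integrableP.
  split; first exact: measurable_funS mfn.
  by under eq_integral do rewrite abse_id; case/fin_numPlt/andP: tfin.
have -> : tail_integral f^\- K = \int[nu]_x tail x.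
  by rewrite /tail_integral (integral_mkcond D).
rewrite -(integral_cst nu measurableT).
have icst := integrable_cst_fin K nuS.
rewrite -(integralB _ ipsi icst) // -integralB //; last exact: integrableB.
apply: le_integral_measurable => // [|x _].
  apply: emeasurable_funB.
    exact: emeasurable_funB (measurable_int _ ipsi) (measurable_int _ icst).
  by apply/(measurable_restrictT _ mD); exact: measurable_funS mfn.
rewrite /= /tail patchE funenegE gee0_abs ?le_max ?lexx ?orbT //.
have -> : (x \in D) = (K%:E <= maxe (- f x) 0).
  apply/idP/idP => [/set_mem|?]; [|apply/mem_set];
  by rewrite /D /= funenegE gee0_abs // le_max lexx orbT.
exact: sube_tail_le.
Qed.

End integral_lemmas.

Section lipschitz_envelope.
Context {R : realType} {S : metricType R}.
Local Open Scope ring_scope.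
Variables (a : S -> R) (k : R).

Definition lipschitz_envelope (s : S) : R :=
  inf [set a t + k * mdist s t | t in [set: S]].

Hypotheses (a_ge0 : forall t, 0 <= a t) (k_ge0 : 0 <= k).

Let envelope_set_lbound s : lbound [set a t + k * mdist s t | t in [set: S]] 0.
Proof. by move=> _ [t _ <-]; rewrite addr_ge0 // mulr_ge0 // mdist_ge0. Qed.

Lemma lipschitz_envelope_ge s (c : R) : (forall t, c <= a t + k * mdist s t) ->
  c <= lipschitz_envelope s.
Proof.
by move=> ca; apply: lb_le_inf; [exists (a s + k * mdist s s), s|move=> _ [t _ <-]].
Qed.

Lemma lipschitz_envelope_ge0 s : 0 <= lipschitz_envelope s.
Proof.
by apply: lipschitz_envelope_ge => t; apply: envelope_set_lbound; exists t.
Qed.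

Lemma lipschitz_envelope_le s : lipschitz_envelope s <= a s.
Proof.
have -> : a s = a s + k * mdist s s by rewrite mdistxx mulr0 addr0.
by apply: ge_inf; [exists 0; exact: envelope_set_lbound|exists s].
Qed.

Lemma lipschitz_envelope_lipschitz s s' :
  lipschitz_envelope s' <= lipschitz_envelope s + k * mdist s s'.
Proof.
rewrite -lerBlDr; apply: lipschitz_envelope_ge => t; rewrite lerBlDr.
apply: le_trans (_ : a t + k * mdist s' t <= _).
  by apply: ge_inf; [exists 0; exact: envelope_set_lbound|exists t].
rewrite -addrA lerD2l -mulrDr ler_wpM2l // addrC [mdist s s']metric_sym.
exact: metric_triangle.
Qed.

Lemma lipschitz_envelope_continuous : continuous lipschitz_envelope.
Proof.
move=> x; apply/cvgrPdist_lt => e e0; apply/nbhs_ballP.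
have k1 : 0 < k + 1 by rewrite ltr_wpDl.
exists (e / (k + 1)); first by rewrite /= divr_gt0.
move=> t; rewrite ballEmdist /= ltr_pdivlMr // => xt.
have := lipschitz_envelope_lipschitz x t; have := lipschitz_envelope_lipschitz t x.
have := mdist_ge0 x t; rewrite [mdist t x]metric_sym => ? ? ?.
rewrite ltr_norml; apply/andP; split; nra.
Qed.

End lipschitz_envelope.

Section lipschitz_minorant.
Context {R : realType} {S : metricType R}.
Variable F : nat -> S -> \bar R.

Definition tail_ball_inf (N : nat) (s : S) : \bar R :=
  ereal_inf [set z | exists2 m, (N <= m)%N &
                       exists2 t, ball s N.+1%:R^-1 t & z = F m t].

Definition truncated_tail_inf (j : nat) (t : S) : R :=
  fine (mine (tail_ball_inf j t) j%:R%:E).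

Definition lipschitz_minorant (j : nat) : S -> R :=
  lipschitz_envelope (truncated_tail_inf j) j%:R.

Hypothesis F_ge0 : forall m s, 0 <= F m s.

Lemma tail_ball_inf_ge0 N s : 0 <= tail_ball_inf N s.
Proof. by apply: le_ereal_inf_tmp => _ [m _ [t _ ->]]. Qed.

Lemma truncated_tail_infE j t :
  (truncated_tail_inf j t)%:E = mine (tail_ball_inf j t) j%:R%:E.
Proof.
rewrite /truncated_tail_inf fineK // ge0_fin_numE ?gt_min ?ltry ?orbT //.
by rewrite le_min tail_ball_inf_ge0 lee_fin ler0n.
Qed.

Lemma truncated_tail_inf_ge0 j t : (0 <= truncated_tail_inf j t)%R.
Proof.
by rewrite -lee_fin truncated_tail_infE le_min tail_ball_inf_ge0 lee_fin ler0n.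
Qed.

Lemma lipschitz_minorant_ge0 j s : (0 <= lipschitz_minorant j s)%R.
Proof. exact: lipschitz_envelope_ge0 (truncated_tail_inf_ge0 j) (ler0n _ j) s. Qed.

Let lipschitz_minorant_le_truncated j s :
  (lipschitz_minorant j s <= truncated_tail_inf j s)%R.
Proof. exact: lipschitz_envelope_le (truncated_tail_inf_ge0 j) (ler0n _ j) s. Qed.

Lemma lipschitz_minorant_le j s : (lipschitz_minorant j s <= j%:R)%R.
Proof.
apply: le_trans (lipschitz_minorant_le_truncated j s) _.
by rewrite -lee_fin truncated_tail_infE ge_min lexx orbT.
Qed.

Lemma lipschitz_minorant_continuous j : continuous (lipschitz_minorant j).
Proof.
exact: lipschitz_envelope_continuous (truncated_tail_inf_ge0 j) (ler0n _ j).
Qed.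

Lemma lipschitz_minorant_le_F j m s : (j <= m)%N ->
  (lipschitz_minorant j s)%:E <= F m s.
Proof.
move=> jm; apply: le_trans (_ : (truncated_tail_inf j s)%:E <= _).
  by rewrite lee_fin lipschitz_minorant_le_truncated.
rewrite truncated_tail_infE ge_min; apply/orP; left.
by apply: ereal_inf_lbound; exists m => //; exists s => //; exact: ballxx.
Qed.

Lemma le_tail_ball_inf N j s t : (N <= j)%N ->
  ball t j.+1%:R^-1 `<=` ball s N.+1%:R^-1 ->
  tail_ball_inf N s <= tail_ball_inf j t.
Proof.
move=> Nj ts; apply: ereal_inf_le_tmp => _ [m jm [u tu ->]].
by exists m; [exact: leq_trans jm|exists u => //; exact: ts].
Qed.

Lemma lipschitz_minorant_ge_near N s (c : R) : c%:E < tail_ball_inf N s ->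
  \forall j \near \oo, (c <= lipschitz_minorant j s)%R.
Proof.
move=> cH; have [c0|c0] := ltrP c 0.
  by near=> j; apply: le_trans (ltW c0) (lipschitz_minorant_ge0 _ _).
(* Points t with d(s, t) < 1/q see B(t, 1/(j+1)) inside B(s, 1/(N+1)), so
   their truncated infimum is >= c; the others pay j d(s, t) >= j/q >= c. *)
pose q : R := (N.+1 * 2)%:R.
have q0 : (0 < q)%R by rewrite ltr0n.
near=> j; apply: lipschitz_envelope_ge => t.
have jd0 : (0 <= j%:R * mdist s t)%R by rewrite mulr_ge0 ?mdist_ge0.
have [st|ts] := ltrP (mdist s t) q^-1.
- rewrite -[c]addr0 lerD // -lee_fin truncated_tail_infE le_min.
  rewrite (le_trans (ltW cH)) /=; last first.
    apply: le_tail_ball_inf => [|u]; first by near: j; exact: nbhs_infty_ge.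
    rewrite !ballEmdist /= => tu; apply: le_lt_trans (metric_triangle s t u) _.
    have <- : (q^-1 + q^-1 = N.+1%:R^-1 :> R)%R.
      by rewrite -mulr2n -[in LHS]mulr_natr /q natrM invfM -mulrA mulVf ?mulr1.
    apply: ltr_leD st (le_trans (ltW tu) _).
    rewrite lef_pV2 ?posrE // ler_nat mulSn add2n ltnS muln2.
    by near: j; exact: nbhs_infty_ge.
  rewrite lee_fin (le_trans _ (_ : c * q <= j%:R))%R ?ler_peMr ?ler1n //.
  by near: j; exact: nbhs_infty_ger.
- rewrite ler_wpDl ?truncated_tail_inf_ge0 //.
  apply: le_trans (_ : j%:R * q^-1 <= _)%R; last by rewrite ler_wpM2l.
  by rewrite ler_pdivlMr //; near: j; exact: nbhs_infty_ger.
Unshelve. all: by end_near. Qed.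

Lemma tail_ball_inf_le_liminf N s :
  tail_ball_inf N s <= limn_einf (fun j => (lipschitz_minorant j s)%:E).
Proof.
apply/lee_fin_ltP => c /lipschitz_minorant_ge_near cH.
by apply: limn_einf_ge; apply: filterS cH => j; rewrite lee_fin.
Qed.

End lipschitz_minorant.

Section liminf_joint_lemmas.
Context {R : realType} {S : pmetricType R}.
Implicit Types f g : nat -> borel S -> \bar R.

Lemma liminf_joint_lower_semicontinuous f :
  lower_semicontinuous (liminf_joint f).
Proof.
move=> x a /ereal_sup_gt[_ [n [d d0 ->]] ad].
exists (ball x (d / 2)%R); first by apply: nbhsx_ballx; rewrite divr_gt0.
move=> y xy; apply: (lt_le_trans ad); apply: le_trans (_ : _ <= ereal_inf
  [set z | exists2 m, (n <= m)%N & exists2 s', ball y (d / 2)%R s' & z = f m s']) _.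
  apply: ereal_inf_le_tmp => _ [m nm [s' ys' ->]]; exists m => //; exists s' => //.
  move: xy ys'; rewrite !ballEmdist /= => xy ys'.
  by have := metric_triangle x y s'; lra.
by apply: ereal_sup_ubound; exists n, (d / 2)%R => //; rewrite divr_gt0.
Qed.

Lemma le_liminf_joint f g (c : R) : (forall m x, f m x + c%:E <= g m x) ->
  forall s, liminf_joint f s + c%:E <= liminf_joint g s.
Proof.
move=> fg s; rewrite -leeBrDr //; apply: ge_ereal_sup => _ [n [d d0 ->]].
rewrite leeBrDr //; apply: le_trans (_ : _ <= ereal_inf
  [set z | exists2 m, (n <= m)%N & exists2 s', ball s d s' & z = g m s']) _.
  apply: le_ereal_inf_tmp => _ [m nm [s' ss' ->]].
  apply: le_trans (fg m s'); rewrite leeD2r //.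
  by apply: ereal_inf_lbound; exists m => //; exists s'.
by apply: ereal_sup_ubound; exists n, d.
Qed.

Lemma liminf_joint_le_liminf_minorant f : (forall m x, 0 <= f m x) ->
  forall s, liminf_joint f s <= limn_einf (fun j => (lipschitz_minorant f j s)%:E).
Proof.
move=> f0 s; apply: ge_ereal_sup => _ [n [d d0 ->]].
near \oo => N; apply: le_trans (tail_ball_inf_le_liminf f f0 N s).
apply: ereal_inf_le_tmp => _ [m Nm [t st ->]]; exists m.
  by apply: leq_trans Nm; near: N; exact: nbhs_infty_ge.
exists t => //; apply: le_ball st; apply: ltW.
by near: N; exact: (near_infty_natSinv_lt (PosNum d0)).
Unshelve. all: by end_near. Qed.

Lemma lipschitz_minorant_measurable f j : (forall m x, 0 <= f m x) ->
  measurable_fun (setT : set (borel S)) (fun x => (lipschitz_minorant f j x)%:E).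
Proof.
move=> f0; apply: lower_semicontinuous_measurable_borel.
exact/continuous_lower_semicontinuous/lipschitz_minorant_continuous.
Qed.

End liminf_joint_lemmas.

Section weak_convergence.
Context {R : realType} {S : pmetricType R}.
Variables (mu_ : nat -> {measure set (borel S) -> \bar R})
  (mu : {measure set (borel S) -> \bar R}).
Hypotheses (mu_cvg : weak_cvg mu_ mu) (muS : mu setT \is a fin_num).

Lemma asymp_unif_integrable_tail_lt (h : nat -> borel S -> \bar R) (e : R) :
  asymp_unif_integrable mu_ h -> (0 < e)%R ->
  exists2 K : R, (0 <= K)%R &
    \forall n \near \oo, tail_integral (mu_ n) (h n) K < e%:E.
Proof.
move=> hui e0; have /hui tail_lt : nbhs (0 : \bar R) [set y | y < e%:E].
  by apply: open_ereal_lt'; rewrite lte_fin.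
have [K [K0 tailK]] := filter_ex (filterI (nbhs_pinfty_ge (@real0 R)) tail_lt).
by exists K => //; exact: limn_esup_lt.
Qed.

Lemma weak_cvg_setT : mu_ n setT @[n --> \oo] --> mu setT.
Proof.
have bd : exists M : R, forall x : S, (`|cst 1%R x| <= M)%R.
  by exists 1%R => x; rewrite normr1.
have int1 (nu : {measure set (borel S) -> \bar R}) :
    \int[nu]_x (cst 1%R x)%:E = nu setT.
  by rewrite -[RHS]mul1e -integral_cst.
have := mu_cvg (cst 1%R) (@cst_continuous S R 1%R) bd.
by rewrite int1; under eq_fun do rewrite int1.
Qed.

Lemma integral_minorant_le_liminf (f : nat -> borel S -> \bar R) (psi : S -> R)
    (K B e : R) :
  (forall n, measurable_fun setT (f n)) -> (0 <= K)%R ->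
  (\forall n \near \oo, tail_integral (mu_ n) (f n)^\- K < e%:E) ->
  continuous psi -> (forall x, 0 <= psi x)%R -> (forall x, psi x <= B)%R ->
  (\forall n \near \oo, forall x, (psi x)%:E <= maxe (f n x) (- K%:E) + K%:E) ->
  \int[mu]_x (psi x)%:E - K%:E * mu setT - e%:E <=
    limn_einf (fun n => \int[mu_ n]_x f n x).
Proof.
move=> mf K0 tail_lt cpsi psi0 psiB psif.
have bpsi x : (`|psi x| <= B)%R by rewrite ger0_norm.
have mpsi : measurable_fun (setT : set (borel S)) (EFin \o psi).
  apply: lower_semicontinuous_measurable_borel.
  exact: continuous_lower_semicontinuous.
have ipsi (nu : {measure set (borel S) -> \bar R}) nuS :=
  integrable_bounded nu psi B nuS mpsi bpsi.
have cv : (\int[mu_ n]_x (psi x)%:E - K%:E * mu_ n setT - e%:E) @[n --> \oo] -->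
    \int[mu]_x (psi x)%:E - K%:E * mu setT - e%:E.
  have psi_fin := integrable_fin_num measurableT (ipsi mu muS).
  apply: cvgeB; [by rewrite fin_num_adde_defr // fin_numB psi_fin fin_numM| |].
    apply: cvgeB; [by rewrite fin_num_adde_defr|exact: mu_cvg (ex_intro _ B bpsi)|].
    exact: cvgeZl weak_cvg_setT.
  exact: cvg_cst.
rewrite -(cvg_lim _ cv) // -is_cvg_limn_einfE; last exact: cvgP cv.
have := weak_cvg_setT; rewrite -(fineK muS) => /fine_cvgP[muS_near _].
apply: le_limn_einf; near=> n.
have nuS : mu_ n setT \is a fin_num by near: n.
have tail_n : tail_integral (mu_ n) (f n)^\- K < e%:E by near: n.
have tail_fin : tail_integral (mu_ n) (f n)^\- K \is a fin_num.
  rewrite ge0_fin_numE ?(lt_trans tail_n) ?ltry //.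
  by apply: integral_ge0 => x _; exact: abse_ge0.
have psif_n : forall x, (psi x)%:E <= maxe (f n x) (- K%:E) + K%:E by near: n.
apply: le_trans (integral_ge_truncated _ _ _ _ K0 nuS (mf n) (ipsi _ nuS) psi0 psif_n
  tail_fin).
exact: leeB (lexx _) (ltW tail_n).
Unshelve. all: by end_near. Qed.

End weak_convergence.

Theorem theorem2p4 (R : realType) (S : pmetricType R)
  (mu_ : nat -> {measure set (borel S) -> \bar R})
  (mu : {measure set (borel S) -> \bar R})
  (f : nat -> borel S -> \bar R) :
  weak_cvg mu_ mu ->
  mu setT < +oo ->
  (forall n, measurable_fun setT (f n)) ->
  asymp_unif_integrable mu_ (fun n => (f n)^\-) ->
  (* all integrals appearing are assumed to be defined *)
  (forall n, \int[mu_ n]_x (f n)^\+ x < +oo \/ \int[mu_ n]_x (f n)^\- x < +oo) ->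
  (\int[mu]_x (liminf_joint f)^\+ x < +oo \/
   \int[mu]_x (liminf_joint f)^\- x < +oo) ->
  \int[mu]_x liminf_joint f x <= limn_einf (fun n => \int[mu_ n]_x f n x).
Proof.
move=> mu_cvg muS_lt mf hui _ _.
have muS : mu setT \is a fin_num by rewrite ge0_fin_numE.
set J := limn_einf _; apply/lee_addgt0Pr => e e0.
have [K K0 tail_lt] := asymp_unif_integrable_tail_lt _ _ _ hui e0.
pose F m x := maxe (f m x) (- K%:E) + K%:E.
have F0 m x : 0 <= F m x by rewrite /F -leeBlDr // sub0e le_max lexx orbT.
pose psi j (x : borel S) := (lipschitz_minorant F j x)%:E.
have mpsi j := lipschitz_minorant_measurable _ j F0.
have int_psi j : \int[mu]_x psi j x <= J + e%:E + K%:E * mu setT.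
  rewrite -leeBlDr ?fin_numM // -leeBlDr //.
  apply: (integral_minorant_le_liminf _ _ mu_cvg muS _ _ _ j%:R)
    mf K0 tail_lt _ _ _ _.
  - exact: lipschitz_minorant_continuous.
  - exact: lipschitz_minorant_ge0.
  - exact: lipschitz_minorant_le.
  - by exists j => // n /= jn x; apply: lipschitz_minorant_le_F.
pose Lam x := limn_einf (psi ^~ x).
have int_Lam : \int[mu]_x Lam x <= J + e%:E + K%:E * mu setT.
  apply: le_trans (fatou mu measurableT mpsi _) (limn_einf_le _ _ int_psi) => j x _.
  by rewrite lee_fin lipschitz_minorant_ge0.
have liminf_Lam x : liminf_joint f x + K%:E <= Lam x.
  apply: le_trans (liminf_joint_le_liminf_minorant _ F0 x).
  by apply: le_liminf_joint => m y; rewrite leeD2r // le_max lexx.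
rewrite -(@leeD2rE _ (K%:E * mu setT)) ?fin_numM //; apply: le_trans int_Lam.
apply: (le_integral_addr_cst _ _ _ _ muS _ _ _ liminf_Lam).
- apply: lower_semicontinuous_measurable_borel.
  exact: liminf_joint_lower_semicontinuous.
- exact: measurable_fun_limn_einf.
- by move=> x; apply: limn_einf_ge; near=> j; rewrite lee_fin lipschitz_minorant_ge0.
Unshelve. all: by end_near. Qed.
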